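(* Let $\mathcal{M}=(N,\mathcal{I})$ be a matroid, $f:2^N\to\mathbb{R}$ a normalized submodular function, $\varepsilon\in(0,1)$, $\beta\ge0$. Let $I_1,\dots,I_k,S_1,\dots,S_k$ be random subsets of $N$; write $U_i=S_1\cup\dots\cup S_i$ and $V_i=I_1\cup\dots\cup I_i$ ($U_0=V_0=\emptyset$). Suppose: (a) for each $i$, almost surely $I_i\subseteq S_i\subseteq N\setminus\mathrm{span}(U_{i-1})$, $I_i$ is independent in $\mathcal{M}/U_{i-1}$, and, conditioned on $(I_j,S_j)_{j<i}$, $\mathbb{E}[f_{U_{i-1}}(I_i)]\ge(1-\varepsilon)\,\mathbb{E}[|S_i|]\cdot\max\{0,\max_{e\in N\setminus\mathrm{span}(U_{i-1})}f_{U_{i-1}}(e)\}$; (b) almost surely $f_{U_k}(T\setminus\mathrm{span}(U_k))\le\beta$ for all $T\in\mathcal{I}$. Then (i) $\mathbb{E}[f(V_k)]\ge(1-\varepsilon)\mathbb{E}[f(U_k)]$; and (ii) for every fixed $T\in\mathcal{I}$ there is a partition $T=T_1\cup\dots\cup T_{k+1}$, with each $T_i$ a deterministic function of $S_1,\dots,S_k$, such that $T_i\cap\mathrm{span}(U_{i-1})=\emptyset$ for each $i$, and $\mathbb{E}[f(V_k)]\ge(1-\varepsilon)\sum_{i=1}^{k+1}\mathbb{E}[f_{U_{i-1}}(T_i)]-(1-\varepsilon)\beta$.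
   Context: $f$ normalized: $f(\emptyset)=0$; submodular: $f(A)+f(B)\ge f(A\cup B)+f(A\cap B)$. $f_U(A)=f(U\cup A)-f(U)$. $\mathrm{span}(S)=\{e:\mathrm{rank}(S\cup\{e\})=\mathrm{rank}(S)\}$. The contraction $\mathcal{M}/U$ has ground set $N\setminus\mathrm{span}(U)$, and $A$ is independent in it iff $\mathrm{rank}(A\cup U)-\mathrm{rank}(U)=|A|$. *)

From HB Require Import structures.
From mathcomp Require Import all_boot all_order all_algebra.
Set Implicit Arguments. Unset Strict Implicit. Unset Printing Implicit Defensive.
Import Order.TTheory GRing.Theory Num.Theory.

Record matroid (T : finType) := Matroid {
  indep : {set T} -> bool;
  indep0 : indep set0;
  indep_sub : forall A B : {set T}, A \subset B -> indep B -> indep A;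
  indep_aug : forall A B : {set T}, indep A -> indep B -> #|A| < #|B| ->
    exists2 e, e \in B :\: A & indep (e |: A)
}.

Section MatroidDefs.
Variables (T : finType) (M : matroid T).

Definition mrank (S : {set T}) : nat :=
  \max_(A : {set T} | (A \subset S) && indep M A) #|A|.

Definition mspan (S : {set T}) : {set T} :=
  [set e | mrank (e |: S) == mrank S].

(* A is independent in the contraction M/U *)
Definition indep_contr (U A : {set T}) : bool :=
  (A \subset ~: mspan U) && (mrank (A :|: U) - mrank U == #|A|).
End MatroidDefs.

Section SetFunDefs.
Variables (T : finType) (R : realFieldType).
Local Open Scope ring_scope.

Definition normalized (f : {set T} -> R) : Prop := f set0 = 0.
Definition submodular (f : {set T} -> R) : Prop :=
  forall A B : {set T}, f (A :|: B) + f (A :&: B) <= f A + f B.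

Definition marg (f : {set T} -> R) (U A : {set T}) : R := f (U :|: A) - f U.
End SetFunDefs.

(* Finite probability space: weights p on a finite sample space Omega.
   (All random objects here take values in a finite set, so this is
   no loss of generality.) *)
Section Prob.
Variables (Omega : finType) (R : realFieldType).
Local Open Scope ring_scope.

Definition is_prob (p : Omega -> R) : Prop :=
  (forall w, 0 <= p w) /\ \sum_w p w = 1.

Definition Exp (p : Omega -> R) (X : Omega -> R) : R := \sum_w p w * X w.

Definition condExp (p : Omega -> R) (E : pred Omega) (X : Omega -> R) : R :=
  (\sum_(w | E w) p w * X w) / (\sum_(w | E w) p w).
End Prob.

Section Process.
Variables (T Omega : finType).
(* Paper's S_{j+1}, I_{j+1} are  S j, I j  (0-based). *)
Definition Uset (S : nat -> Omega -> {set T}) (i : nat) (w : Omega) : {set T} :=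
  \bigcup_(j < i) S j w.

Definition same_hist (I S : nat -> Omega -> {set T}) (i : nat) (w w' : Omega) : bool :=
  [forall j : 'I_i, (I j w == I j w') && (S j w == S j w')].
End Process.

Definition maxgain (T : finType) (R : realFieldType) (M : matroid T)
  (f : {set T} -> R) (U : {set T}) : R :=
  \big[Num.max/0%R]_(e | e \notin mspan M U) marg f U [set e].

(* Both sides are compared with the budget  sum_i |S_i| g_i,  where
   g_i = max{0, max_e f_{U_i}(e)} is antitone in i by submodularity.  Pointwise,
   f(U_k) <= budget by subadditivity of marginals; the tower property turns (a) into
   E f(V_k) >= (1 - eps) E budget, because f_{V_i}(I_i) >= f_{U_i}(I_i).  For (ii),
   T is split according to the first i with e in span(U_{i+1}): at most
   rank(U_j) <= |S_1| + ... + |S_j| elements of T are spanned by U_j, so Abel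
   summation against the antitone g_i bounds sum_i f_{U_i}(T_i) by the budget, and
   the unspanned remainder T_{k+1} costs at most beta by (b). *)

From HB Require Import structures.
From mathcomp Require Import all_boot all_order all_algebra.
From mathcomp Require Import lra.
Import Order.TTheory GRing.Theory Num.Theory.
Set Implicit Arguments. Unset Strict Implicit. Unset Printing Implicit Defensive.

Section MatroidRank.
Variables (T : finType) (M : matroid T).
Implicit Types (A B C D S U : {set T}).

Lemma leq_card_mrank A S : A \subset S -> indep M A -> #|A| <= mrank M S.
Proof. by move=> AS iA; apply: (leq_bigmax_cond A); rewrite AS iA. Qed.

Lemma mrank_witness S :
  exists2 B : {set T}, (B \subset S) && indep M B & #|B| = mrank M S.
Proof.
have P0 : (set0 \subset S) && indep M set0 by rewrite sub0set indep0.
rewrite /mrank (@bigop.bigmax_eq_arg _ set0 _ (fun B : {set T} => #|B|) P0).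
by case: arg_maxnP => // B PB _; exists B.
Qed.

Lemma mrank0 : mrank M set0 = 0.
Proof.
have [B /andP[] ] := mrank_witness set0.
by rewrite subset0 => /eqP-> _ <-; rewrite cards0.
Qed.

Lemma mrank_leq_card S : mrank M S <= #|S|.
Proof. by have [B /andP[BS _] <-] := mrank_witness S; apply: subset_leq_card. Qed.

Lemma mrankS A B : A \subset B -> mrank M A <= mrank M B.
Proof.
move=> AB; have [C /andP[CA iC] <-] := mrank_witness A.
by apply: leq_card_mrank => //; apply: subset_trans AB.
Qed.

Lemma subset_mspan U : U \subset mspan M U.
Proof. by apply/subsetP=> e eU; rewrite inE (setUidPr _) ?sub1set. Qed.

Lemma indep_notin_mspan0 A e : indep M A -> e \in A -> e \notin mspan M set0.
Proof.
move=> iA eA; rewrite inE mrank0 setU0 -lt0n.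
by rewrite -(cards1 e) leq_card_mrank // (indep_sub _ iA) ?sub1set.
Qed.

Lemma card_indep_mspan A U : indep M A -> #|A :&: mspan M U| <= mrank M U.
Proof.
move=> iA; have iAU : indep M (A :&: mspan M U) by apply: indep_sub iA; apply: subsetIl.
have [B /andP[BU iB] rkB] := mrank_witness U.
rewrite leqNgt -rkB; apply/negP=> /(indep_aug iB iAU)[x /setDP[/setIP[_] + xB] ixB].
rewrite inE => /eqP rkxU.
have := leq_card_mrank (setUS [set x] BU) ixB.
by rewrite rkxU cardsU1 xB -rkB ltnn.
Qed.

Lemma indep_extend D C : indep M D -> indep M C -> #|D| <= #|C| ->
  exists D', [/\ D \subset D', D' \subset D :|: C, indep M D' & #|D'| = #|C|].
Proof.
move=> + iC; move: {2}(#|C| - #|D|) (erefl (#|C| - #|D|)) => n.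
elim: n D => [|n IH] D ediff iD DC.
  exists D; split; rewrite ?subxx ?subsetUl //.
  by apply/eqP; rewrite eqn_leq DC -subn_eq0 ediff.
have /(indep_aug iD iC)[x /setDP[xC xD] ixD] : #|D| < #|C| by rewrite -subn_gt0 ediff.
have [||D' [DD' D'DC iD' cD']] := IH (x |: D) _ ixD.
- by rewrite cardsU1 xD subnS ediff.
- by rewrite cardsU1 xD -subn_gt0 ediff.
exists D'; split=> //; first by apply: subset_trans DD'; apply: subsetUr.
apply: subset_trans D'DC _; by rewrite -setUA subUset subxx andbT sub1set in_setU xC orbT.
Qed.

(* If x enlarged the rank of B it could be added to a basis D' of x |: B grown from a
   basis of A, and then x |: (basis of A) would be independent in x |: A. *)
Lemma mspanS A B : A \subset B -> mspan M A \subset mspan M B.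
Proof.
move=> AB; apply/subsetP=> x; rewrite !inE => /eqP rkxA.
have [xB | xNB] := boolP (x \in B); first by rewrite (setUidPr _) ?sub1set.
rewrite eqn_leq [X in _ && X]mrankS ?subsetUr // andbT leqNgt; apply/negP=> rkB_lt.
have [C /andP[CxB iC] rkC] := mrank_witness (x |: B).
have [D /andP[DA iD] rkD] := mrank_witness A.
have DC : #|D| <= #|C| by rewrite rkC rkD (leq_trans (mrankS AB) (ltnW rkB_lt)).
have [D' [DD' D'DC iD' cD']] := indep_extend iD iC DC.
have xD' : x \in D'.
  apply: contraLR rkB_lt => xND'; rewrite -leqNgt -rkC -cD' leq_card_mrank //.
  apply/subsetP=> y yD'; have /setUP[yD|yC] := subsetP D'DC y yD'.
    exact: subsetP AB _ (subsetP DA y yD).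
  have /setU1P[exy|//] := subsetP CxB y yC.
  by rewrite -exy yD' in xND'.
have xND : x \notin D by apply: contra xNB => /(subsetP DA)/(subsetP AB).
have := leq_card_mrank (setUS [set x] DA) (indep_sub _ iD').
by rewrite subUset sub1set xD' DD' rkxA cardsU1 xND -rkD ltnn => /(_ isT).
Qed.

End MatroidRank.

Local Open Scope ring_scope.

Section Marginals.
Variables (R : realFieldType) (T : finType) (f : {set T} -> R).
Hypothesis f_submod : submodular f.
Implicit Types (A B U V X Y : {set T}).

Lemma marg_le_subset A B X : A \subset B -> [disjoint X & B] -> marg f B X <= marg f A X.
Proof.
move=> AB dXB; have := f_submod (A :|: X) B; rewrite /marg.
rewrite setUAC (setUidPr AB) setIUl (setIidPl AB).
by move: dXB; rewrite -setI_eq0 => /eqP->; rewrite setU0; lra.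
Qed.

Lemma marg_setU1_le U Y x :
  x \notin Y -> marg f U (x |: Y) <= marg f U Y + marg f U [set x].
Proof.
move=> xNY; have := f_submod (U :|: Y) (U :|: [set x]); rewrite /marg.
have -> : (U :|: Y) :|: (U :|: [set x]) = U :|: (x |: Y).
  by apply/setP=> z; rewrite !inE; case: (z \in U); case: (z == x); case: (z \in Y).
have -> : (U :|: Y) :&: (U :|: [set x]) = U.
  apply/setP=> z; rewrite !inE; case: (z \in U) => //=.
  by case: eqP => [->|]; rewrite ?andbF // (negbTE xNY).
lra.
Qed.

Variable M : matroid T.

Lemma maxgain_ge0 U : 0 <= maxgain M f U.
Proof. exact: bigmax_ge_id. Qed.

Lemma marg1_le_maxgain U e : e \notin mspan M U -> marg f U [set e] <= maxgain M f U.
Proof. exact: (le_bigmax_cond 0 (fun e => marg f U [set e])). Qed.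

Lemma marg_le_card_maxgain U X :
  [disjoint X & mspan M U] -> marg f U X <= #|X|%:R * maxgain M f U.
Proof.
move: {2}#|X| (erefl #|X|) => n; elim: n X => [|n IH] X cardX dX.
  by rewrite (cards0_eq cardX) /marg setU0 subrr cards0 mul0r.
have [x xX] : exists x, x \in X by apply/set0Pn; rewrite -card_gt0 cardX.
rewrite -(setD1K xX) in dX *; set Y := X :\ x in dX *.
have xNY : x \notin Y by rewrite !inE eqxx.
have xNU : x \notin mspan M U by rewrite (disjointFr dX) ?setU11.
have dY : [disjoint Y & mspan M U] by apply: disjointWl dX; apply: subsetUr.
have cardY : #|Y| = n by move: cardX; rewrite (cardsD1 x) xX add1n => -[].
rewrite cardsU1 xNY cardY natrD mulrDl mul1r addrC -cardY.
by apply: le_trans (marg_setU1_le U xNY) _; rewrite lerD ?IH ?marg1_le_maxgain.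
Qed.

Lemma maxgain_antitone U V : U \subset V -> maxgain M f V <= maxgain M f U.
Proof.
move=> UV; apply: bigmax_le => [|e eNV]; first exact: maxgain_ge0.
have eNU : e \notin mspan M U by apply: contra eNV; apply: subsetP (mspanS M UV) e.
apply: le_trans (marg1_le_maxgain eNU); apply: marg_le_subset => //.
by rewrite disjoints1; apply: contra eNV; apply: subsetP (subset_mspan M V) e.
Qed.

End Marginals.

Section FiniteExpectation.
Variables (R : realFieldType) (Omega : finType) (p : Omega -> R).
Hypothesis p_ge0 : forall w, 0 <= p w.
Implicit Types (X Y : Omega -> R).

Lemma ler_Exp X Y : (forall w, 0 < p w -> X w <= Y w) -> Exp p X <= Exp p Y.
Proof.
move=> XY; apply: ler_sum => w _.
have [->|pw] := eqVneq (p w) 0; first by rewrite !mul0r.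
by rewrite ler_pM2l ?XY // lt0r pw p_ge0.
Qed.

Lemma Exp_sum n (X : 'I_n -> Omega -> R) :
  Exp p (fun w => \sum_(i < n) X i w) = \sum_(i < n) Exp p (X i).
Proof. by rewrite /Exp; under eq_bigr do rewrite mulr_sumr; apply: exchange_big. Qed.

Lemma ExpD X Y : Exp p (fun w => X w + Y w) = Exp p X + Exp p Y.
Proof. by rewrite /Exp -big_split; apply: eq_bigr => w _; rewrite mulrDr. Qed.

Lemma Exp_cst c : \sum_w p w = 1 -> Exp p (fun=> c) = c.
Proof. by move=> p1; rewrite /Exp -mulr_suml p1 mul1r. Qed.

Variable C : rel Omega.
Hypothesis C_equiv : equivalence_rel C.

(* Law of total expectation for the partition of Omega into C-classes; the
   zero-probability classes, where condExp divides by 0, have weight 0. *)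
Lemma Exp_condExp X : Exp p (fun w => condExp p (C w) X) = Exp p X.
Proof.
have [C_refl C_trans] := (equivalence_relP C).1 C_equiv.
have C_sym w w' : C w w' -> C w' w by move/C_trans <-.
pose P w := \sum_(w' | C w w') p w'.
have PE w w' : C w w' -> P w = P w' by move/C_trans=> Cw; apply: eq_bigl => z; rewrite /= Cw.
rewrite /Exp /condExp.
transitivity (\sum_w \sum_(w' | C w w') p w * (p w' * X w') / P w).
  by apply: eq_bigr => w _; rewrite mulrA mulr_sumr mulr_suml.
rewrite (exchange_big_dep xpredT) //=; apply: eq_bigr => w' _.
transitivity (\sum_(w | C w' w) p w * (p w' * X w') / P w').
  by apply: eq_big => [w|w Cw]; [apply/idP/idP => /C_sym | rewrite (PE w w' Cw)].
rewrite -!mulr_suml -/(P w').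
have [->|pw'] := eqVneq (p w') 0; first by rewrite !mul0r mulr0 mul0r.
have P_gt0 : 0 < P w'.
  by rewrite /P (bigD1 w') //= ltr_wpDr ?sumr_ge0 // lt0r pw' p_ge0.
by rewrite mulrAC divff ?mul1r // gt_eqF.
Qed.

End FiniteExpectation.

Lemma ler_sum_mul_antitone (R : numDomainType) n (a b m : nat -> R) :
  (forall i, m i.+1 <= m i) -> 0 <= m n ->
  (forall j, (j <= n)%N -> \sum_(i < j) a i <= \sum_(i < j) b i) ->
  \sum_(i < n) a i * m i <= \sum_(i < n) b i * m i.
Proof.
move=> m_anti m_ge0 ab.
have D_ge0 j : (j <= n)%N -> 0 <= \sum_(i < j) (b i - a i).
  by move=> /ab; rewrite sumrB subr_ge0.
have key j : (j <= n)%N ->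
    (\sum_(i < j) (b i - a i)) * m j <= \sum_(i < j) (b i - a i) * m i.
  elim: j => [|j IH] jn; first by rewrite !big_ord0 mul0r.
  rewrite [X in _ <= X]big_ord_recr /=.
  apply: le_trans (_ : _ <= (\sum_(i < j.+1) (b i - a i)) * m j) _.
    by rewrite ler_wpM2l ?D_ge0.
  by rewrite big_ord_recr mulrDl /= lerD2r IH // ltnW.
rewrite -subr_ge0 -sumrB; under eq_bigr do rewrite -mulrBl.
by apply: le_trans (key n (leqnn n)); rewrite mulr_ge0 ?D_ge0.
Qed.

Section History.
Variables (T Omega : finType).
Implicit Types (I S : nat -> Omega -> {set T}) (w : Omega).

Lemma Uset0 S w : Uset S 0 w = set0.
Proof. by rewrite /Uset big_ord0. Qed.

Lemma UsetS S i w : Uset S i.+1 w = Uset S i w :|: S i w.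
Proof. by rewrite /Uset big_ord_recr. Qed.

Lemma subset_Uset S i j w : (i <= j)%N -> Uset S i w \subset Uset S j w.
Proof.
move=> ij; apply/subsetP=> x /bigcupP[l _ xl].
by apply/bigcupP; exists (widen_ord ij l).
Qed.

Lemma card_Uset S j w : (#|Uset S j w| <= \sum_(i < j) #|S i w|)%N.
Proof.
elim: j => [|j IH]; first by rewrite Uset0 cards0.
by rewrite UsetS big_ord_recr /= (leq_trans (leq_card_setU _ _)) ?leq_add2r.
Qed.

Lemma same_hist_equiv I S i : equivalence_rel (same_hist I S i).
Proof.
apply/(equivalence_relP _); split=> [w|w1 w2 /forallP h12 w3].
  by apply/forallP=> j; rewrite !eqxx.
apply/forallP/forallP=> h j; have /andP[/eqP e1 /eqP e2] := h12 j.
  by rewrite -e1 -e2; exact: h j.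
by rewrite e1 e2; exact: h j.
Qed.

Lemma Uset_same_hist I S i w w' : same_hist I S i w w' -> Uset S i w' = Uset S i w.
Proof. by move/forallP=> h; apply: eq_bigr => j _; have /andP[_ /eqP->] := h j. Qed.

End History.

Section SpanLevels.
Variables (T Omega : finType) (M : matroid T) (S : nat -> Omega -> {set T}) (k : nat).
Variables (Tt : {set T}) (w : Omega).
Hypothesis Tt_indep : indep M Tt.

(* The least j < k with e in span U_(j+1), or k if there is none; [level_part i]
   is the paper's T_(i+1). *)
Definition span_level (e : T) : nat :=
  find (fun j => e \in mspan M (Uset S j.+1 w)) (iota 0 k).

Definition level_part (i : nat) : {set T} := [set e in Tt | span_level e == i].

Lemma span_level_le e : (span_level e <= k)%N.
Proof. by rewrite (leq_trans (find_size _ _)) ?size_iota. Qed.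

Lemma span_level_notin_mspan e : e \in Tt -> e \notin mspan M (Uset S (span_level e) w).
Proof.
move=> eTt; case lev_e: (span_level e) => [|j].
  by rewrite Uset0; apply: indep_notin_mspan0 Tt_indep eTt.
have jk : (j < k)%N by rewrite (leq_trans _ (span_level_le e)) ?lev_e.
by have := before_find 0 (_ : (j < span_level e)%N); rewrite nth_iota // add0n lev_e => ->.
Qed.

Lemma mem_mspan_span_level e j :
  (span_level e < j)%N -> (j <= k)%N -> e \in mspan M (Uset S j w).
Proof.
move=> lt_lev_j jk; have lt_lev_k := leq_trans lt_lev_j jk.
have has_span : has (fun j => e \in mspan M (Uset S j.+1 w)) (iota 0 k).
  by rewrite has_find size_iota.
apply: (subsetP (mspanS M (subset_Uset S w lt_lev_j))).
by have := nth_find 0 has_span; rewrite nth_iota // add0n.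
Qed.

Lemma level_part_last : level_part k = Tt :\: mspan M (Uset S k w).
Proof.
apply/setP=> e; rewrite /level_part in_set in_setD andbC.
have [eTt|] := boolP (e \in Tt); rewrite ?andbT ?andbF //.
apply/eqP/idP=> [<-|eNspan]; first exact: span_level_notin_mspan.
move: (span_level_le e); rewrite leq_eqVlt => /orP[/eqP //|lt_lev_k].
by rewrite mem_mspan_span_level in eNspan.
Qed.

Lemma level_part_disjoint_mspan i : [disjoint level_part i & mspan M (Uset S i w)].
Proof.
rewrite disjoints_subset; apply/subsetP=> e; rewrite in_set in_setC => /andP[eTt /eqP <-].
exact: span_level_notin_mspan.
Qed.

Lemma sum_card_level_part j :
  (\sum_(i < j) #|level_part i| = #|[set e in Tt | span_level e < j]|)%N.
Proof.
elim: j => [|j IH].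
  rewrite big_ord0 (_ : [set e in Tt | _] = set0) ?cards0 //.
  by apply/setP=> e; rewrite !inE ltn0 andbF.
have -> : [set e in Tt | (span_level e < j.+1)%N] =
    [set e in Tt | (span_level e < j)%N] :|: level_part j.
  by apply/setP=> e; rewrite !inE ltnS leq_eqVlt orbC andb_orr.
rewrite big_ord_recr /= IH cardsU (_ : _ :&: _ = set0) ?cards0 ?subn0 //.
by apply/setP=> e; rewrite !inE; case: ltngtP; rewrite ?andbF.
Qed.

(* The first j parts lie in Tt :&: span U_j, whose size is bounded by rank U_j. *)
Lemma leq_sum_card_level_part j :
  (j <= k)%N -> (\sum_(i < j) #|level_part i| <= \sum_(i < j) #|S i w|)%N.
Proof.
move=> jk; rewrite sum_card_level_part (leq_trans _ (card_Uset S j w)) //.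
rewrite (leq_trans _ (mrank_leq_card M _)) // (leq_trans _ (card_indep_mspan _ Tt_indep)) //.
apply: subset_leq_card; apply/subsetP=> e; rewrite in_set => /andP[eTt lt_lev_j].
by rewrite in_setI eTt mem_mspan_span_level.
Qed.

Lemma bigcup_level_part : \bigcup_(i < k.+1) level_part i = Tt.
Proof.
apply/setP=> e; apply/bigcupP/idP=> [[i _]|eTt]; first by rewrite inE => /andP[].
have lev_lt : (span_level e < k.+1)%N by rewrite ltnS span_level_le.
by exists (Ordinal lev_lt); rewrite // inE eTt /=.
Qed.

Lemma level_part_disjoint i j : i != j -> [disjoint level_part i & level_part j].
Proof.
move=> ij; rewrite -setI_eq0; apply/eqP/setP=> e; rewrite !inE.
by apply: contraNF ij => /andP[/andP[_ /eqP <-] /andP[_ /eqP <-]].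
Qed.

End SpanLevels.

Lemma level_part_same_prefix (T Omega : finType) (M : matroid T) S k Tt i (w w' : Omega) :
  (forall j, (j < k)%N -> S j w = S j w') ->
  level_part M S k Tt w i = level_part M S k Tt w' i.
Proof.
move=> eqS; apply/setP=> e; rewrite !in_set /span_level.
congr (_ && (_ == _)); apply: eq_in_find => j; rewrite mem_iota add0n => /andP[_ jk] /=.
congr (e \in mspan M _); apply: eq_bigr => l _; apply: eqS.
exact: leq_trans (ltn_ord l) jk.
Qed.

Lemma f_Uset_telescope (R : realFieldType) (T Omega : finType) (f : {set T} -> R)
    (S : nat -> Omega -> {set T}) k w :
  normalized f -> f (Uset S k w) = \sum_(i < k) marg f (Uset S i w) (S i w).
Proof.
move=> f0; rewrite -(big_mkord xpredT (fun i => marg f (Uset S i w) (S i w))).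
rewrite (telescope_sumr_eq (fun i => f (Uset S i w))) //= ?Uset0 ?f0 ?subr0 //.
by move=> j _; rewrite /marg UsetS.
Qed.

Section GreedyBudget.
Variables (R : realFieldType) (T Omega : finType) (M : matroid T) (f : {set T} -> R).
Variables (p : Omega -> R) (k : nat) (I S : nat -> Omega -> {set T}).
Hypotheses (f_norm : normalized f) (f_submod : submodular f).
Hypothesis p_ge0 : forall w, 0 <= p w.
Hypothesis S_notin_mspan :
  forall i w, (i < k)%N -> 0 < p w -> S i w \subset ~: mspan M (Uset S i w).

Definition budget (w : Omega) : R :=
  \sum_(i < k) #|S i w|%:R * maxgain M f (Uset S i w).

Lemma f_Uset_le_budget w : 0 < p w -> f (Uset S k w) <= budget w.
Proof.
move=> pw; rewrite f_Uset_telescope //; apply: ler_sum => i _.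
by rewrite marg_le_card_maxgain // disjoints_subset S_notin_mspan.
Qed.

(* Abel summation: the parts are charged to the antitone gains maxgain(U_i) and,
   cumulatively, are no larger than the S_i. *)
Lemma sum_marg_level_part_le_budget Tt w : indep M Tt ->
  \sum_(i < k) marg f (Uset S i w) (level_part M S k Tt w i) <= budget w.
Proof.
move=> Tt_indep; apply: le_trans (_ : \sum_(i < k)
    #|level_part M S k Tt w i|%:R * maxgain M f (Uset S i w) <= _).
  by apply: ler_sum => i _; rewrite marg_le_card_maxgain ?level_part_disjoint_mspan.
apply: (ler_sum_mul_antitone (a := fun i => #|level_part M S k Tt w i|%:R)
  (b := fun i => #|S i w|%:R) (m := fun i => maxgain M f (Uset S i w))) => [i||j jk].
- exact: (maxgain_antitone f_submod M (subset_Uset S w (leqnSn i))).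
- exact: maxgain_ge0.
- by rewrite -!natr_sum ler_nat leq_sum_card_level_part.
Qed.

Variable c : R.
Hypothesis I_sub_S : forall i w, (i < k)%N -> 0 < p w -> I i w \subset S i w.
Hypothesis gain :
  forall i w, (i < k)%N -> 0 < p w ->
  c * condExp p (same_hist I S i w) (fun w' => #|S i w'|%:R) * maxgain M f (Uset S i w)
  <= condExp p (same_hist I S i w) (fun w' => marg f (Uset S i w') (I i w')).

(* maxgain(U_i) is constant on each history class, so it factors out of condExp. *)
Lemma Exp_marg_ge_gain i : (i < k)%N ->
  c * Exp p (fun w => #|S i w|%:R * maxgain M f (Uset S i w))
  <= Exp p (fun w => marg f (Uset S i w) (I i w)).
Proof.
move=> ik; have hist_equiv := same_hist_equiv I S i.
rewrite -[Exp p (fun w => _ * _)](Exp_condExp p_ge0 hist_equiv).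
rewrite -[Exp p (fun w => marg _ _ _)](Exp_condExp p_ge0 hist_equiv).
rewrite /Exp mulr_sumr; apply: ler_sum => w _.
have -> : condExp p (same_hist I S i w)
            (fun w' => #|S i w'|%:R * maxgain M f (Uset S i w')) =
          condExp p (same_hist I S i w) (fun w' => #|S i w'|%:R) * maxgain M f (Uset S i w).
  rewrite /condExp mulrAC; congr (_ / _); rewrite mulr_suml; apply: eq_bigr => w' hist_w'.
  by rewrite (Uset_same_hist hist_w') mulrA.
have [->|pw] := eqVneq (p w) 0; first by rewrite !mul0r mulr0.
have pw_gt0 : 0 < p w by rewrite lt0r pw p_ge0.
by rewrite mulrCA ler_pM2l // mulrA gain.
Qed.

Lemma Exp_greedy_ge_budget : c * Exp p budget <= Exp p (fun w => f (Uset I k w)).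
Proof.
have -> : Exp p (fun w => f (Uset I k w)) =
          Exp p (fun w => \sum_(i < k) marg f (Uset I i w) (I i w)).
  by apply: eq_bigr => w _; rewrite f_Uset_telescope.
rewrite /budget !Exp_sum mulr_sumr; apply: ler_sum => [[i ik]] _ /=.
apply: le_trans (Exp_marg_ge_gain ik) _; apply: ler_Exp => // w pw.
apply: marg_le_subset => //.
  apply/subsetP=> x /bigcupP[j _ xj]; apply/bigcupP; exists j => //.
  exact: subsetP (I_sub_S (ltn_trans (ltn_ord j) ik) pw) x xj.
rewrite disjoints_subset (subset_trans (I_sub_S ik pw) (subset_trans (S_notin_mspan ik pw) _)) //.
by rewrite setCS subset_mspan.
Qed.

End GreedyBudget.

Theorem mainTheorem6 (R : realFieldType) (T : finType) (M : matroid T)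
  (f : {set T} -> R) (eps beta : R)
  (Omega : finType) (p : Omega -> R)
  (k : nat) (I S : nat -> Omega -> {set T}) :
  normalized f -> submodular f ->
  0 < eps < 1 -> 0 <= beta ->
  is_prob p ->
  (* (a) *)
  (forall (i : nat), (i < k)%N -> forall w, 0 < p w ->
     [/\ I i w \subset S i w,
         S i w \subset ~: mspan M (Uset S i w),
         indep_contr M (Uset S i w) (I i w) &
         condExp p (same_hist I S i w) (fun w' => marg f (Uset S i w') (I i w'))
         >= (1 - eps) * condExp p (same_hist I S i w) (fun w' => (#|S i w'|)%:R)
                      * maxgain M f (Uset S i w)]) ->
  (* (b) *)
  (forall w, 0 < p w -> forall Tt : {set T}, indep M Tt ->
     marg f (Uset S k w) (Tt :\: mspan M (Uset S k w)) <= beta) ->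
  (* (i) *)
  Exp p (fun w => f (Uset I k w)) >= (1 - eps) * Exp p (fun w => f (Uset S k w))
  /\
  (* (ii) *)
  (forall Tt : {set T}, indep M Tt ->
    exists Tp : nat -> Omega -> {set T},
      [/\ (forall w w', (forall j, (j < k)%N -> S j w = S j w') ->
             forall i, Tp i w = Tp i w'),
          (forall w, Tt = \bigcup_(i < k.+1) Tp i w),
          (forall w (i j : 'I_k.+1), i != j -> [disjoint Tp i w & Tp j w]),
          (forall w (i : 'I_k.+1), [disjoint Tp i w & mspan M (Uset S i w)]) &
          Exp p (fun w => f (Uset I k w))
          >= (1 - eps) * \sum_(i < k.+1) Exp p (fun w => marg f (Uset S i w) (Tp i w))
             - (1 - eps) * beta]).
Proof.
move=> f_norm f_submod /andP[_ eps_lt1] beta_ge0 [p_ge0 p_sum1] hyp_a hyp_b.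
have c_ge0 : 0 <= 1 - eps by rewrite subr_ge0 ltW.
have I_sub_S i w : (i < k)%N -> 0 < p w -> I i w \subset S i w.
  by move=> ik pw; case: (hyp_a i ik w pw).
have S_notin i w : (i < k)%N -> 0 < p w -> S i w \subset ~: mspan M (Uset S i w).
  by move=> ik pw; case: (hyp_a i ik w pw).
have gain i w (ik : (i < k)%N) (pw : 0 < p w) := let: And4 _ _ _ g := hyp_a i ik w pw in g.
have greedy := Exp_greedy_ge_budget f_norm f_submod p_ge0 S_notin I_sub_S gain.
split.
  apply: le_trans greedy; rewrite ler_wpM2l //; apply: ler_Exp => // w pw.
  exact: f_Uset_le_budget f_norm f_submod S_notin w pw.
move=> Tt Tt_indep; exists (fun i w => level_part M S k Tt w i); split.
- by move=> w w' eqS i; apply: level_part_same_prefix.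
- by move=> w; rewrite bigcup_level_part.
- by move=> w i j ij; apply: level_part_disjoint.
- by move=> w i; apply: level_part_disjoint_mspan.
have parts_le : Exp p (fun w => \sum_(i < k.+1) marg f (Uset S i w) (level_part M S k Tt w i))
                <= Exp p (budget M f k S) + beta.
  rewrite -(Exp_cst beta p_sum1) -ExpD; apply: ler_Exp => // w pw.
  rewrite big_ord_recr /= level_part_last // lerD ?hyp_b //.
  exact: sum_marg_level_part_le_budget.
rewrite -Exp_sum; apply: le_trans greedy.
by rewrite lerBlDr -mulrDr ler_wpM2l.
Qed.
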